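(* Let $M$ be a monoid of binary relations on a finite set $Q$, let $e\in M$ be an idempotent, and let $\Gamma$ be the set of strongly connected components of the restriction of $e$ to its set of fixed points. For $m\in H(e)$ define the relation $\gamma_e(m)$ on $\Gamma$ by $\gamma_e(m)=\{(\rho,\sigma)\in\Gamma\times\Gamma\mid (r,s)\in m\text{ and }(s,r)\in m^{-1}\text{ for some }r\in\rho,\ s\in\sigma\}$. Then each $\gamma_e(m)$ is a permutation of $\Gamma$, and $m\mapsto\gamma_e(m)$ is an isomorphism from the group $H(e)$ onto a group of permutations of $\Gamma$.
   Context: A monoid of relations on $Q$ is a set of binary relations on $Q$ containing the identity relation and closed under composition $mn=\{(p,q)\mid\exists r,(p,r)\in m,(r,q)\in n\}$. A fixed point of $e$ is $q$ with $(q,q)\in e$. $H(e)$ denotes the $\mathcal H$-class of $e$ in $M$ (Green's relation $\mathcal H=\mathcal R\cap\mathcal L$); since it contains the idempotent $e$ it is a group with identity $e$, and $m^{-1}$ denotes the inverse of $m$ in this group. *)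

From mathcomp Require Import all_boot.
Set Implicit Arguments. Unset Strict Implicit. Unset Printing Implicit Defensive.

Section Defs.
Variable T : finType.

Definition rcomp (m n : {set T * T}) : {set T * T} :=
  [set pq | [exists r, ((pq.1, r) \in m) && ((r, pq.2) \in n)]].

Definition idrel : {set T * T} := [set pq | pq.1 == pq.2].

Definition is_rel_monoid (M : {set {set T * T}}) : Prop :=
  idrel \in M /\ (forall m n, m \in M -> n \in M -> rcomp m n \in M).

(* Green's relations (M contains the identity, so M^1 = M) *)
Definition greenR (M : {set {set T * T}}) (a b : {set T * T}) : bool :=
  [exists x in M, a == rcomp b x] && [exists y in M, b == rcomp a y].
Definition greenL (M : {set {set T * T}}) (a b : {set T * T}) : bool :=
  [exists x in M, a == rcomp x b] && [exists y in M, b == rcomp y a].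

Definition Hclass (M : {set {set T * T}}) (e : {set T * T}) : {set {set T * T}} :=
  [set m in M | greenR M m e && greenL M m e].

Definition Hinv (M : {set {set T * T}}) (e m : {set T * T}) : {set T * T} :=
  odflt e [pick m' in Hclass M e | (rcomp m m' == e) && (rcomp m' m == e)].

Definition fixpts (e : {set T * T}) : {set T} := [set q | (q, q) \in e].

Definition restr (e : {set T * T}) : rel T :=
  fun p q => [&& p \in fixpts e, q \in fixpts e & (p, q) \in e].

Definition scc (e : {set T * T}) (q : T) : {set T} :=
  [set q' | connect (restr e) q q' && connect (restr e) q' q].

Definition Gamma (e : {set T * T}) : {set {set T}} :=
  [set scc e q | q in fixpts e].

Definition gammae (M : {set {set T * T}}) (e m : {set T * T})
  : {set {set T} * {set T}} :=
  [set rs in setX (Gamma e) (Gamma e) |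
     [exists r in rs.1, exists s in rs.2,
        ((r, s) \in m) && ((s, r) \in Hinv M e m)]].

End Defs.

Definition is_perm_rel (A : finType) (G : {set A}) (g : {set A * A}) : Prop :=
  g \subset setX G G /\
  (forall a, a \in G -> exists! b, (a, b) \in g) /\
  (forall b, b \in G -> exists! a, (a, b) \in g).

From mathcomp Require Import all_boot.
Set Implicit Arguments. Unset Strict Implicit. Unset Printing Implicit Defensive.

(* The proof rests on three independent pieces of theory.
   - An idempotent relation e is transitive, so two fixed points lie in the
     same strongly connected component of e restricted to its fixed points
     exactly when they are e-related both ways; moreover, by finiteness,
     every edge (x,z) of e factors as x e f e z through a fixed point f.
   - The H-class H(e) is a group with identity e: its elements m satisfy
     em = m = me, it is closed under composition, inverses are unique,
     (m^-1)^-1 = m and (mn)^-1 = n^-1 m^-1.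
   - From these, gamma_e(m) is the graph of a function on Gamma; since
     gamma_e(m^-1) is the converse relation of gamma_e(m), it is a
     bijection.  It is multiplicative by a direct computation, and it is
     injective because, by the factorization property, an element m of
     H(e) is determined by the pairs of components it links. *)

Section Composition.
Variable Q : finType.
Implicit Types (a b c : {set Q * Q}) (x y z : Q).

Lemma rcompP a b x z :
  reflect (exists y, (x, y) \in a /\ (y, z) \in b) ((x, z) \in rcomp a b).
Proof.
rewrite /rcomp inE /=; apply: (iffP existsP).
- by move=> [y /andP[xy yz]]; exists y.
- by move=> [y [xy yz]]; exists y; rewrite xy yz.
Qed.

Lemma rcomp_mem a b x y z : (x, y) \in a -> (y, z) \in b -> (x, z) \in rcomp a b.
Proof. by move=> xy yz; apply/rcompP; exists y. Qed.

Lemma rcompA a b c : rcomp (rcomp a b) c = rcomp a (rcomp b c).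
Proof.
apply/setP => -[x z]; apply/rcompP/rcompP.
- by move=> [y [/rcompP[w [xw wy]] yz]]; exists w; split=> //; apply: rcomp_mem yz.
- by move=> [w [xw /rcompP[y [wy yz]]]]; exists y; split=> //; apply: rcomp_mem wy.
Qed.

End Composition.

Section Idempotent.
Variables (Q : finType) (e : {set Q * Q}).
Hypothesis e_idem : rcomp e e = e.
Implicit Types (x y z : Q) (rho : {set Q}).

Lemma idem_trans x y z : (x, y) \in e -> (y, z) \in e -> (x, z) \in e.
Proof. by move=> xy yz; rewrite -e_idem; apply: rcomp_mem xy yz. Qed.

(* Every edge of an idempotent relation on a finite set passes through a
   fixed point: choose a midpoint y with the fewest e-midpoints between x
   and y; splitting x e y once more yields a midpoint w that must be one of
   its own midpoints, i.e. a fixed point. *)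
Lemma idem_factor x z :
  (x, z) \in e -> exists2 f, (f, f) \in e & (x, f) \in e /\ (f, z) \in e.
Proof.
move=> xz; pose mid y := ((x, y) \in e) && ((y, z) \in e).
pose between y := [set w | ((x, w) \in e) && ((w, y) \in e)].
have [y0 mid_y0] : exists y0, mid y0.
  by move: xz; rewrite -{1}e_idem => /rcompP[y [xy yz]]; exists y; rewrite /mid xy yz.
case: (arg_minnP (fun y => #|between y|) mid_y0) => y /andP[xy yz] y_min.
move: (xy); rewrite -{1}e_idem => /rcompP[w [xw wy]].
have mid_w : mid w by rewrite /mid xw (idem_trans wy yz).
have sub_wy : between w \subset between y.
  by apply/subsetP => v; rewrite !inE => /andP[-> vw]; apply: idem_trans vw wy.
have eq_wy : between w = between y by apply/eqP; rewrite eqEcard sub_wy y_min.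
have : w \in between w by rewrite eq_wy inE xw wy.
by rewrite inE => /andP[_ ww]; exists w => //; split=> //; apply: idem_trans wy yz.
Qed.

Lemma connect_restr x y : connect (restr e) x y -> x = y \/ (x, y) \in e.
Proof.
case/connectP => p; elim: p x => [|w p IH] x /=; first by move=> _ ->; left.
move=> /andP[/and3P[_ _ xw] wp] y_last; right.
by case: (IH w wp y_last) => [<- //|]; apply: idem_trans xw.
Qed.

Lemma sccE q x :
  (q, q) \in e -> (x \in scc e q) = ((q, x) \in e) && ((x, q) \in e).
Proof.
move=> qq; rewrite /scc inE; apply/andP/andP => [[qx xq]|[qx xq]].
- case: (connect_restr qx) => [<-|qx']; first by [].
  by case: (connect_restr xq) => [E|]; [rewrite -E in qx' *|].
- have xx : (x, x) \in e := idem_trans xq qx.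
  by split; apply: connect1; rewrite /restr !inE ?qq ?xx ?qx ?xq.
Qed.

Lemma scc_self x : (x, x) \in e -> x \in scc e x.
Proof. by move=> xx; rewrite sccE // xx. Qed.

Lemma scc_Gamma x : (x, x) \in e -> scc e x \in Gamma e.
Proof. by move=> xx; apply/imsetP; exists x; rewrite ?inE. Qed.

Lemma scc_eq x y :
  (x, x) \in e -> (x, y) \in e -> (y, x) \in e -> scc e x = scc e y.
Proof.
move=> xx xy yx; have yy := idem_trans yx xy.
apply/setP => w; rewrite !sccE //; apply/andP/andP => -[a b]; split.
- exact: idem_trans yx a.
- exact: idem_trans b xy.
- exact: idem_trans xy a.
- exact: idem_trans b yx.
Qed.

Lemma Gamma_scc rho x : rho \in Gamma e -> x \in rho -> rho = scc e x /\ (x, x) \in e.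
Proof.
case/imsetP => q; rewrite inE => qq -> /[dup] qx; rewrite sccE // => /andP[q_x x_q].
by split; [apply: scc_eq | apply: idem_trans x_q q_x].
Qed.

Lemma Gamma_rel rho x y : rho \in Gamma e -> x \in rho -> y \in rho -> (x, y) \in e.
Proof.
move=> G xr; have [-> xx] := Gamma_scc G xr.
by rewrite sccE // => /andP[].
Qed.

End Idempotent.

Section HclassRepresentation.
Variables (Q : finType) (M : {set {set Q * Q}}) (e : {set Q * Q}).
Hypothesis M_monoid : is_rel_monoid M.
Hypothesis e_in_M : e \in M.
Hypothesis e_idem : rcomp e e = e.
Implicit Types (m n : {set Q * Q}) (x y z : Q).
Local Notation He := (Hclass M e).
Local Notation inv := (Hinv M e).

Lemma rcomp_in_M m n : m \in M -> n \in M -> rcomp m n \in M.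
Proof. by case: M_monoid => _; apply. Qed.

Lemma HclassE m : m \in He ->
  [/\ m \in M, exists2 x, x \in M & m = rcomp e x, exists2 y, y \in M & e = rcomp m y,
      exists2 x, x \in M & m = rcomp x e & exists2 y, y \in M & e = rcomp y m].
Proof.
rewrite inE => /andP[mM /andP[/andP[/existsP[x /andP[xM /eqP h1]]
  /existsP[y /andP[yM /eqP h2]]] /andP[/existsP[x' /andP[xM' /eqP h3]]
  /existsP[y' /andP[yM' /eqP h4]]]]].
by split=> //; [exists x | exists y | exists x' | exists y'].
Qed.

Lemma Hclass_intro m m' : m \in M -> m' \in M ->
  rcomp e m = m -> rcomp m e = m -> rcomp m m' = e -> rcomp m' m = e -> m \in He.
Proof.
move=> mM m'M em me mm' m'm; rewrite inE mM /=.
apply/andP; split; apply/andP; split; apply/existsP.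
- by exists m; rewrite mM em eqxx.
- by exists m'; rewrite m'M mm' eqxx.
- by exists m; rewrite mM me eqxx.
- by exists m'; rewrite m'M m'm eqxx.
Qed.

Lemma Hclass_idl m : m \in He -> rcomp e m = m.
Proof. by case/HclassE=> _ [x _ ->] _ _ _; rewrite -rcompA e_idem. Qed.

Lemma Hclass_idr m : m \in He -> rcomp m e = m.
Proof. by case/HclassE=> _ _ _ [x _ ->] _; rewrite rcompA e_idem. Qed.

Lemma Hclass_satl m x y z : m \in He -> (x, y) \in e -> (y, z) \in m -> (x, z) \in m.
Proof. by move=> Hm xy yz; rewrite -(Hclass_idl Hm); apply: rcomp_mem yz. Qed.

Lemma Hclass_satr m x y z : m \in He -> (x, y) \in m -> (y, z) \in e -> (x, z) \in m.
Proof. by move=> Hm xy yz; rewrite -(Hclass_idr Hm); apply: rcomp_mem yz. Qed.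

(* If e = my and e = y'm then ey = y'e is a two-sided inverse of m in H(e). *)
Lemma Hclass_has_inv m : m \in He ->
  exists2 m', m' \in He & rcomp m m' = e /\ rcomp m' m = e.
Proof.
move=> Hm; have ml := Hclass_idl Hm; have mr := Hclass_idr Hm.
case/HclassE: Hm => mM _ [y yM ey] _ [y' yM' ey'].
have eyy'e : rcomp e y = rcomp y' e by rewrite {2}ey -rcompA -ey'.
have m_ey : rcomp m (rcomp e y) = e by rewrite -rcompA mr.
have ey_m : rcomp (rcomp e y) m = e by rewrite eyy'e rcompA ml.
exists (rcomp e y) => //; apply: Hclass_intro m_ey => //.
- exact: rcomp_in_M e_in_M yM.
- by rewrite -rcompA e_idem.
- by rewrite eyy'e rcompA e_idem.
Qed.

Lemma HinvP m : m \in He ->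
  [/\ inv m \in He, rcomp m (inv m) = e & rcomp (inv m) m = e].
Proof.
move=> Hm; rewrite /Hinv; case: pickP => [m' /andP[Hm' /andP[/eqP -> /eqP ->]] //|none].
case: (Hclass_has_inv Hm) => m' Hm' [mm' m'm].
by move: (none m'); rewrite Hm' mm' m'm eqxx.
Qed.

Lemma Hinv_uniq m m' : m \in He -> m' \in He -> rcomp m' m = e -> m' = inv m.
Proof.
move=> Hm Hm' m'm; case: (HinvP Hm) => Hi mi _.
have -> : m' = rcomp m' (rcomp m (inv m)) by rewrite mi Hclass_idr.
by rewrite -rcompA m'm (Hclass_idl Hi).
Qed.

Lemma Hinv_invol m : m \in He -> inv (inv m) = m.
Proof. by move=> Hm; have [Hi mi _] := HinvP Hm; rewrite -(Hinv_uniq Hi Hm mi). Qed.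

Lemma Hclass_mul m n : m \in He -> n \in He -> rcomp m n \in He.
Proof.
move=> Hm Hn; case: (HinvP Hm) => Him mi im; case: (HinvP Hn) => Hin ni in_n.
have [mM _ _ _ _] := HclassE Hm; have [nM _ _ _ _] := HclassE Hn.
have [imM _ _ _ _] := HclassE Him; have [inM _ _ _ _] := HclassE Hin.
apply: (@Hclass_intro _ (rcomp (inv n) (inv m))).
- exact: rcomp_in_M.
- exact: rcomp_in_M.
- by rewrite -rcompA Hclass_idl.
- by rewrite rcompA Hclass_idr.
- by rewrite rcompA -(rcompA n) ni Hclass_idl // mi.
- by rewrite rcompA -(rcompA (inv m)) im Hclass_idl // in_n.
Qed.

Lemma Hinv_mul m n : m \in He -> n \in He ->
  inv (rcomp m n) = rcomp (inv n) (inv m).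
Proof.
move=> Hm Hn; case: (HinvP Hm) => Him _ im; case: (HinvP Hn) => Hin _ in_n.
apply/esym/Hinv_uniq; [exact: Hclass_mul | exact: Hclass_mul |].
by rewrite rcompA -(rcompA (inv m)) im Hclass_idl // in_n.
Qed.

Implicit Types (rho sig : {set Q}).
Local Notation gamma := (gammae M e).

Lemma gammaP m rho sig :
  reflect [/\ rho \in Gamma e, sig \in Gamma e &
             exists r s, [/\ r \in rho, s \in sig, (r, s) \in m & (s, r) \in inv m]]
          ((rho, sig) \in gamma m).
Proof.
rewrite /gammae in_set in_setX /=; apply: (iffP andP).
- case=> /andP[Grho Gsig] /existsP[r /andP[rr /existsP[s /andP[ss /andP[rs sr]]]]].
  by split=> //; exists r, s.
- case=> Grho Gsig [r [s [rr ss rs sr]]]; split; first by rewrite Grho Gsig.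
  by apply/existsP; exists r; rewrite rr; apply/existsP; exists s; rewrite ss rs sr.
Qed.

Lemma gamma_inv m rho sig :
  m \in He -> ((rho, sig) \in gamma (inv m)) = ((sig, rho) \in gamma m).
Proof.
move=> Hm; have inv_inv := Hinv_invol Hm.
by apply/gammaP/gammaP; rewrite inv_inv => -[G1 G2 [r [s [rr ss rs sr]]]];
  split=> //; exists s, r.
Qed.

(* gamma_e(m) is the graph of a function on Gamma: from a fixed point q,
   e = m m^-1 provides an m-successor s with (s,q) in m^-1, and any two
   such successors of points of one component are e-related both ways. *)
Lemma gamma_functional m rho :
  m \in He -> rho \in Gamma e -> exists! sig, (rho, sig) \in gamma m.
Proof.
move=> Hm; case: (HinvP Hm) => Hi mi im.
case/imsetP => q; rewrite inE => qq ->.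
move: (qq); rewrite -{1}mi => /rcompP[s [qs sq]].
have ss : (s, s) \in e by rewrite -im; apply: rcomp_mem sq qs.
exists (scc e s); split.
  apply/gammaP; split; [exact: scc_Gamma | exact: scc_Gamma |].
  by exists q, s; split=> //; apply: scc_self.
move=> sig /gammaP[_ Gsig [r [s' [rq s'sig rs' s'r]]]].
have Gq := scc_Gamma qq; have q_self := scc_self e_idem qq.
have ss' : (s, s') \in e.
  by rewrite -im; apply: rcomp_mem rs'; apply: Hclass_satr Hi sq (Gamma_rel e_idem Gq q_self rq).
have s's : (s', s) \in e.
  by rewrite -im; apply: rcomp_mem qs; apply: Hclass_satr Hi s'r (Gamma_rel e_idem Gq rq q_self).
by rewrite (Gamma_scc e_idem Gsig s'sig).1; apply: scc_eq.
Qed.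

Lemma gamma_perm m : m \in He -> is_perm_rel (Gamma e) (gamma m).
Proof.
move=> Hm; have [Hi _ _] := HinvP Hm.
split; last split.
- by apply/subsetP => -[rho sig] /gammaP[Grho Gsig _]; rewrite in_setX Grho Gsig.
- by move=> rho; apply: gamma_functional.
- move=> sig Gsig; have [rho [rho_sig rho_uniq]] := gamma_functional Hi Gsig.
  exists rho; split; first by rewrite -gamma_inv.
  by move=> rho' sig_rho'; apply: rho_uniq; rewrite gamma_inv.
Qed.

(* A pair of components linked by mn is linked through the component of
   the middle point, which is a fixed point of e = n n^-1. *)
Lemma gamma_morph m n : m \in He -> n \in He ->
  gamma (rcomp m n) = rcomp (gamma m) (gamma n).
Proof.
move=> Hm Hn; case: (HinvP Hm) => Him _ im.
case: (HinvP Hn) => Hin ni _.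
have inv_mn := Hinv_mul Hm Hn.
apply/setP => -[rho tau]; apply/idP/idP.
- case/gammaP => Grho Gtau [r [t [rr tt /rcompP[s [rs st]] ts_r]]].
  move: ts_r; rewrite inv_mn => /rcompP[s' [ts' s'r]].
  have ss' : (s, s') \in e by rewrite -ni; apply: rcomp_mem st ts'.
  have s's : (s', s) \in e by rewrite -im; apply: rcomp_mem s'r rs.
  have ss := idem_trans e_idem ss' s's.
  apply/rcompP; exists (scc e s); split; apply/gammaP.
  + split=> //; first exact: scc_Gamma.
    exists r, s; split=> //; first exact: scc_self.
    exact: Hclass_satl Him ss' s'r.
  + split=> //; first exact: scc_Gamma.
    exists s, t; split=> //; first exact: scc_self.
    exact: Hclass_satr Hin ts' s's.
- case/rcompP => sig [/gammaP[Grho Gsig [r [s [rr ss rs sr]]]]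
    /gammaP[_ Gtau [s' [t [s'sig tt s't ts']]]]].
  apply/gammaP; split=> //; exists r, t; split=> //.
  + exact: rcomp_mem (Hclass_satr Hm rs (Gamma_rel e_idem Gsig ss s'sig)) s't.
  + rewrite inv_mn; apply: rcomp_mem sr.
    exact: Hclass_satr Hin ts' (Gamma_rel e_idem Gsig s'sig ss).
Qed.

(* An element m of H(e) is recovered from gamma_e(m): an edge (p,q) of m
   factors as p e f m q through a fixed point f, and the component of the
   m-successor of f is linked to that of f by any n with the same gamma. *)
Lemma gamma_sub m n : m \in He -> n \in He -> gamma m = gamma n -> m \subset n.
Proof.
move=> Hm Hn gmn; apply/subsetP => -[p q] pq.
case: (HinvP Hm) => _ mi im.
move: pq; rewrite -(Hclass_idl Hm) => /rcompP[a [pa aq]].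
case: (idem_factor e_idem pa) => f ff [pf fa].
have fq : (f, q) \in m by apply: Hclass_satl Hm fa aq.
move: (ff); rewrite -{1}mi => /rcompP[s [fs sf]].
have ss : (s, s) \in e by rewrite -im; apply: rcomp_mem sf fs.
have sq : (s, q) \in e by rewrite -im; apply: rcomp_mem sf fq.
have : (scc e f, scc e s) \in gamma n.
  rewrite -gmn; apply/gammaP; split; [exact: scc_Gamma | exact: scc_Gamma |].
  by exists f, s; split=> //; apply: scc_self.
case/gammaP => _ _ [r [s' [rf s's r_s' _]]].
move: rf s's; rewrite !sccE // => /andP[fr _] /andP[_ s's].
apply: (Hclass_satr Hn _ (idem_trans e_idem s's sq)).
exact: Hclass_satl Hn (idem_trans e_idem pf fr) r_s'.
Qed.

Lemma gamma_inj : {in He &, injective gamma}.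
Proof.
move=> m n Hm Hn gmn; apply/eqP; rewrite eqEsubset.
by rewrite !gamma_sub.
Qed.

End HclassRepresentation.

Theorem mainTheorem7 (Q : finType) (M : {set {set Q * Q}}) (e : {set Q * Q}) :
  is_rel_monoid M -> e \in M -> rcomp e e = e ->
  [/\ (forall m, m \in Hclass M e -> is_perm_rel (Gamma e) (gammae M e m)),
      {in Hclass M e &, forall m n,
         gammae M e (rcomp m n) = rcomp (gammae M e m) (gammae M e n)}
    & {in Hclass M e &, injective (gammae M e)}].
Proof.
move=> M_monoid e_in_M e_idem; split.
- exact: gamma_perm.
- exact: gamma_morph.
- exact: gamma_inj.
Qed.
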